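(* Let $R$ be a ring and $A$ a subinjective extension-reflecting right $R$-module. Then $A\in \underline{\mathfrak{In}}^{-1}(N)$ for every cyclic right $R$-module $N$ if and only if $A\in \underline{\mathfrak{In}}^{-1}(N)$ for every finitely generated right $R$-module $N$.
   Context: Modules are unital right $R$-modules. For modules $X,Y$, $X\in \underline{\mathfrak{In}}^{-1}(Y)$ means: for every module $C$ containing $X$ as a submodule, every homomorphism $X\to Y$ extends to a homomorphism $C\to Y$. A module $M$ is subinjective extension-reflecting if for every short exact sequence $0\to A'\to B\to C\to 0$ of right $R$-modules, $M\in \underline{\mathfrak{In}}^{-1}(A')\cap \underline{\mathfrak{In}}^{-1}(C)$ implies $M\in \underline{\mathfrak{In}}^{-1}(B)$. *)

From mathcomp Require Import all_boot all_algebra.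
Set Implicit Arguments. Unset Strict Implicit. Unset Printing Implicit Defensive.
Import GRing.Theory.
Local Open Scope ring_scope.

(* Right R-modules are modelled as left modules over the converse ring R^c:
   for r : R and m : M, the right action m * r is  r *: m  in M : lmodType R^c. *)
Notation rmodType R := (lmodType (R^c)).

(* X \in In^{-1}(Y): for every module C containing X as a submodule (i.e. every
   injective homomorphism i : X -> C), every homomorphism f : X -> Y extends
   along i to a homomorphism g : C -> Y. *)
Definition subinj (R : pzRingType) (X Y : rmodType R) : Prop :=
  forall (C : rmodType R) (i : {linear X -> C}), injective i ->
  forall f : {linear X -> Y},
  exists g : {linear C -> Y}, forall x : X, g (i x) = f x.

Definition short_exact (R : pzRingType) (A' B C : rmodType R)
  (f : {linear A' -> B}) (g : {linear B -> C}) : Prop :=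
  [/\ injective f, (forall c : C, exists b : B, g b = c) &
      (forall b : B, g b = 0 <-> exists a : A', f a = b)].

Definition subinj_ext_reflecting (R : pzRingType) (M : rmodType R) : Prop :=
  forall (A' B C : rmodType R) (f : {linear A' -> B}) (g : {linear B -> C}),
  short_exact f g -> subinj M A' -> subinj M C -> subinj M B.

Definition cyclic_mod (R : pzRingType) (N : rmodType R) : Prop :=
  exists n : N, forall x : N, exists r : R, x = (r : R^c) *: n.

Definition fingen_mod (R : pzRingType) (N : rmodType R) : Prop :=
  exists s : seq N, forall x : N, exists r : 'I_(size s) -> R,
    x = \sum_(i < size s) (r i : R^c) *: s`_i.

(* A module generated by [n :: s] is an extension of its cyclic submodule [nR]
   by the quotient [N/nR], which is generated by the images of [s].  Hence,
   by induction on the number of generators, extension reflection propagates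
   [A \in In^{-1}(-)] from cyclic modules to all finitely generated ones. *)

From HB Require Import structures.
From mathcomp Require Import all_boot all_algebra.
From mathcomp Require Import boolp.
Set Implicit Arguments. Unset Strict Implicit. Unset Printing Implicit Defensive.
Import GRing.Theory.
Local Open Scope ring_scope.
Local Open Scope quotient_scope.

Lemma submod_rpredN (K : pzRingType) (V : lmodType K) (S : submodClosed V) x :
  (- x \in S) = (x \in S).
Proof.
apply/idP/idP=> Sx; last by rewrite -scaleN1r rpredZ.
by rewrite -[x]opprK -scaleN1r rpredZ.
Qed.

Section QuotientModule.
Variables (K : pzRingType) (V : lmodType K) (S : submodClosed V).

Definition eqmod_sub : rel V := fun x y => x - y \in S.

Lemma eqmod_sub_refl : reflexive eqmod_sub.
Proof. by move=> x; rewrite /eqmod_sub subrr rpred0. Qed.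
Lemma eqmod_sub_sym : symmetric eqmod_sub.
Proof. by move=> x y; rewrite /eqmod_sub -opprB submod_rpredN. Qed.
Lemma eqmod_sub_trans : transitive eqmod_sub.
Proof.
by move=> y x z Sxy Syz; rewrite /eqmod_sub -[x](subrK y) -addrA rpredD.
Qed.

Canonical eqmod_sub_equiv :=
  EquivRel eqmod_sub eqmod_sub_refl eqmod_sub_sym eqmod_sub_trans.

Definition quotmod := {eq_quot eqmod_sub}.
HB.instance Definition _ : EqQuotient _ eqmod_sub quotmod := EqQuotient.on quotmod.
HB.instance Definition _ := Choice.on quotmod.

Lemma eqmod_subP x y : reflect (x = y %[mod quotmod]) (x - y \in S).
Proof. exact: eqquotP. Qed.

Lemma repr_pi_sub x : repr (\pi_quotmod x) - x \in S.
Proof. by apply/eqmod_subP; rewrite reprK. Qed.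

Definition quot_zero := lift_cst quotmod 0.
Canonical pi_zero_morph := PiConst quot_zero.

Definition quot_add := lift_op2 quotmod +%R.
Lemma pi_add : {morph \pi : x y / x + y >-> quot_add x y}.
Proof.
move=> x y; unlock quot_add; apply/esym/eqmod_subP.
by rewrite opprD addrACA rpredD ?repr_pi_sub.
Qed.
Canonical pi_add_morph := PiMorph2 pi_add.

Definition quot_opp := lift_op1 quotmod -%R.
Lemma pi_opp : {morph \pi : x / - x >-> quot_opp x}.
Proof.
move=> x; unlock quot_opp; apply/esym/eqmod_subP.
by rewrite -opprD submod_rpredN repr_pi_sub.
Qed.
Canonical pi_opp_morph := PiMorph1 pi_opp.

Definition quot_scale k := lift_op1 quotmod ( *:%R k).
Lemma pi_scale k : {morph \pi : x / k *: x >-> quot_scale k x}.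
Proof.
move=> x; unlock quot_scale; apply/esym/eqmod_subP.
by rewrite -scalerBr rpredZ ?repr_pi_sub.
Qed.
Canonical pi_scale_morph k := PiMorph1 (pi_scale k).

Lemma quot_addA : associative quot_add.
Proof. by elim/quotW=> x; elim/quotW=> y; elim/quotW=> z; rewrite !piE addrA. Qed.
Lemma quot_addC : commutative quot_add.
Proof. by elim/quotW=> x; elim/quotW=> y; rewrite !piE addrC. Qed.
Lemma quot_add0 : left_id quot_zero quot_add.
Proof. by elim/quotW=> x; rewrite !piE add0r. Qed.
Lemma quot_addN : left_inverse quot_zero quot_opp quot_add.
Proof. by elim/quotW=> x; rewrite !piE addNr. Qed.
HB.instance Definition _ :=
  GRing.isZmodule.Build quotmod quot_addA quot_addC quot_add0 quot_addN.

Lemma quot_scaleA a b v : quot_scale a (quot_scale b v) = quot_scale (a * b) v.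
Proof. by elim/quotW: v => x; rewrite !piE scalerA. Qed.
Lemma quot_scale1 : left_id 1 quot_scale.
Proof. by elim/quotW=> x; rewrite !piE scale1r. Qed.
Lemma quot_scaleDr : right_distributive quot_scale +%R.
Proof. by move=> k; elim/quotW=> x; elim/quotW=> y; rewrite !piE scalerDr. Qed.
Lemma quot_scaleDl v : {morph quot_scale^~ v : a b / a + b}.
Proof. by elim/quotW: v => x a b; rewrite !piE scalerDl. Qed.
HB.instance Definition _ := GRing.Zmodule_isLmodule.Build K quotmod
  quot_scaleA quot_scale1 quot_scaleDr quot_scaleDl.

Definition quot_proj (x : V) : quotmod := \pi x.

Lemma quot_proj_is_linear : linear quot_proj.
Proof. by move=> k x y; rewrite /quot_proj !piE. Qed.
HB.instance Definition _ :=
  GRing.isLinear.Build K V quotmod *:%R quot_proj quot_proj_is_linear.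

Lemma quot_proj_eq0 x : quot_proj x = 0 <-> x \in S.
Proof.
have pi0 : \pi_quotmod 0 = 0 by rewrite piE.
by have := eqmod_subP x 0; rewrite subr0 pi0 => /rwP.
Qed.

Lemma quot_proj_surj (q : quotmod) : exists x, quot_proj x = q.
Proof. by exists (repr q); rewrite /quot_proj reprK. Qed.

End QuotientModule.

Section Submodule.
Variables (K : pzRingType) (V : lmodType K) (S : submodClosed V).

Record submod := Submod { submod_val : V; _ : submod_val \in S }.
HB.instance Definition _ := [isSub for submod_val].
HB.instance Definition _ := [Choice of submod by <:].
HB.instance Definition _ := [SubChoice_isSubLmodule of submod by <:].

End Submodule.

Section RightModules.
Variable R : pzRingType.

Lemma submod_quot_short_exact (V : rmodType R) (S : submodClosed V) :
  short_exact (val : {linear submod S -> V}) (quot_proj S : {linear V -> _}).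
Proof.
split; [exact: val_inj | exact: quot_proj_surj | move=> x].
rewrite quot_proj_eq0; split=> [Sx | [y <-]]; last exact: valP.
by exists (Sub x Sx); apply: SubK.
Qed.

Lemma subinj_ext_submod_quot (A V : rmodType R) (S : submodClosed V) :
  subinj_ext_reflecting A ->
  subinj A (submod S) -> subinj A (quotmod S) -> subinj A V.
Proof. by move=> extA; apply: extA (submod_quot_short_exact S). Qed.

Definition generated_by (N : rmodType R) (s : seq N) : Prop :=
  forall x : N, exists r : 'I_(size s) -> R,
    x = \sum_(i < size s) (r i : R^c) *: s`_i.

Lemma cyclic_fingen (N : rmodType R) : cyclic_mod N -> fingen_mod N.
Proof.
move=> [n gen]; exists [:: n] => x; have [r ->] := gen x.
by exists (fun=> r); rewrite big_ord1.
Qed.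

Lemma generated_by_nil_cyclic (N : rmodType R) :
  generated_by ([::] : seq N) -> cyclic_mod N.
Proof.
move=> gen; exists 0 => x; have [r ->] := gen x.
by exists 0; rewrite big_ord0 scaler0.
Qed.

Lemma generated_by_cons0 (N : rmodType R) (s : seq N) :
  generated_by (0 :: s) -> generated_by s.
Proof.
move=> gen x; have [r ->] := gen x; exists (fun i => r (lift ord0 i)).
by rewrite big_ord_recl scaler0 add0r.
Qed.

Lemma generated_by_map (M N : rmodType R) (f : {linear M -> N}) (s : seq M) :
  (forall y, exists x, f x = y) -> generated_by s -> generated_by (map f s).
Proof.
move=> f_surj gen y; have [x <-] := f_surj y; have [r ->] := gen x.
rewrite size_map; exists r; rewrite linear_sum; apply: eq_bigr => i _.
by rewrite linearZ (nth_map 0).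
Qed.

(* Membership in [nR] need not be decidable, hence the classical [asbool]. *)
Definition cyclic_span (N : rmodType R) (n : N) : {pred N} :=
  fun x => `[< exists r : R, x = (r : R^c) *: n >].

Lemma cyclic_span_submod_closed (N : rmodType R) (n : N) :
  subsemimod_closed (cyclic_span n).
Proof.
split; first split.
- by apply/asboolP; exists 0; rewrite scale0r.
- move=> x y /asboolP[a ->] /asboolP[b ->]; apply/asboolP.
  by exists (a + b); rewrite scalerDl.
- move=> a x /asboolP[b ->]; apply/asboolP.
  by exists (a * b : R^c); rewrite scalerA.
Qed.
HB.instance Definition _ (N : rmodType R) (n : N) :=
  GRing.isSubmodClosed.Build _ _ (cyclic_span n) (cyclic_span_submod_closed n).

Lemma cyclic_span_mem (N : rmodType R) (n : N) : n \in cyclic_span n.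
Proof. by apply/asboolP; exists 1; rewrite scale1r. Qed.

Lemma cyclic_span_cyclic (N : rmodType R) (n : N) :
  cyclic_mod (submod (cyclic_span n)).
Proof.
exists (Sub n (cyclic_span_mem n)) => x.
have /asboolP[r xr] := valP x; exists r.
by apply: val_inj; rewrite xr linearZ.
Qed.

Lemma generated_by_quot_cons (N : rmodType R) (n : N) (s : seq N) :
  generated_by (n :: s) -> generated_by (map (quot_proj (cyclic_span n)) s).
Proof.
move=> gen; apply: generated_by_cons0.
have /quot_proj_eq0 <- := cyclic_span_mem n.
exact: generated_by_map (@quot_proj_surj _ _ _) gen.
Qed.

Lemma subinj_generated_by (A : rmodType R) :
  subinj_ext_reflecting A -> (forall N : rmodType R, cyclic_mod N -> subinj A N) ->
  forall (N : rmodType R) (s : seq N), generated_by s -> subinj A N.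
Proof.
move=> extA cycA N s; move sz: (size s) => k.
elim: k N s sz => [|k IH] N [|n s] //= => [_ gen | [sz] gen].
  exact/cycA/generated_by_nil_cyclic.
apply: (subinj_ext_submod_quot extA); first exact/cycA/cyclic_span_cyclic.
by apply: (IH _ _ _ (generated_by_quot_cons gen)); rewrite size_map.
Qed.

End RightModules.

Theorem mainTheorem5 (R : pzRingType) (A : rmodType R) :
  subinj_ext_reflecting A ->
  ((forall N : rmodType R, cyclic_mod N -> subinj A N) <->
   (forall N : rmodType R, fingen_mod N -> subinj A N)).
Proof.
move=> extA; split=> [cycA N [s gen] | fgA N cycN].
  exact: subinj_generated_by gen.
exact/fgA/cyclic_fingen.
Qed.
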